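(* Every bounded continuous valuation $\nu$ on Johnstone's dcpo $\mathcal J$ (with the Scott topology) is point-continuous. Moreover, there exist a discrete valuation $\theta$ on $\mathcal J$ and a nonnegative real number $r$ such that $\nu=\theta+r\mu$, where $\mu(U)=1$ for every non-empty Scott-open $U\subseteq\mathcal J$ and $\mu(\emptyset)=0$.
   Context: Johnstone's dcpo: $\mathcal J=\mathbb N\times(\mathbb N\cup\{\infty\})$ ordered by $(a,b)\le(c,d)$ iff either ($a=c$ and $b\le d$) or ($d=\infty$ and $b\le c$). A valuation on a space $X$ is a map $\nu:\mathcal OX\to[0,\infty]$ with $\nu(\emptyset)=0$, monotone and modular ($\nu(U)+\nu(V)=\nu(U\cup V)+\nu(U\cap V)$); continuous if it preserves directed suprema of open sets; bounded if $\nu(X)<\infty$. $\delta_x$ is the Dirac valuation at $x$. A discrete valuation is one of the form $\sum_{i=1}^\infty r_i\delta_{x_i}=\sup_n\sum_{i=1}^n r_i\delta_{x_i}$ with $r_i\in[0,\infty)$. A valuation $\nu$ is point-continuous if for every open $U$ and every real $r$ with $0\le r<\nu(U)$ there is a finite subset $A\subseteq U$ such that $\nu(V)>r$ for every open $V\supseteq A$. *)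

From HB Require Import structures.
From mathcomp Require Import all_boot all_order all_algebra.
From mathcomp Require Import all_classical all_reals ereal.
Set Implicit Arguments. Unset Strict Implicit. Unset Printing Implicit Defensive.
Import Order.TTheory GRing.Theory Num.Theory.
Local Open Scope classical_set_scope.
Local Open Scope ring_scope.

(* N ∪ {∞}: [None] is ∞, [Some n] is n. *)
Definition Ninf := option nat.

Definition le_Ninf (b d : Ninf) : Prop :=
  match d, b with
  | None, _ => True
  | Some d', Some b' => (b' <= d')%N
  | Some _, None => False
  end.

Definition le_Ninf_nat (b : Ninf) (c : nat) : Prop :=
  match b with Some b' => (b' <= c)%N | None => False end.

Definition J := (nat * Ninf)%type.

Definition leJ (p q : J) : Prop :=
  let: (a, b) := p in let: (c, d) := q in
  (a = c /\ le_Ninf b d) \/ (d = None /\ le_Ninf_nat b c).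

Definition directed_set {T} (le : T -> T -> Prop) (D : set T) : Prop :=
  (exists x, D x) /\
  forall a b, D a -> D b -> exists c, D c /\ le a c /\ le b c.

Definition is_sup {T} (le : T -> T -> Prop) (D : set T) (s : T) : Prop :=
  (forall x, D x -> le x s) /\ (forall u, (forall x, D x -> le x u) -> le s u).

Definition scott_open {T} (le : T -> T -> Prop) (U : set T) : Prop :=
  (forall x y, U x -> le x y -> U y) /\
  (forall D s, directed_set le D -> is_sup le D s -> U s ->
     exists x, D x /\ U x).

Definition openJ (U : set J) : Prop := scott_open leJ U.

Section Valuations.
Context {R : realType}.
Local Open Scope ereal_scope.

Definition valuationJ (nu : set J -> \bar R) : Prop :=
  nu set0 = 0 /\
  (forall U, openJ U -> 0 <= nu U) /\
  (forall U V, openJ U -> openJ V -> U `<=` V -> nu U <= nu V) /\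
  (forall U V, openJ U -> openJ V -> nu U + nu V = nu (U `|` V) + nu (U `&` V)).

Definition continuous_valJ (nu : set J -> \bar R) : Prop :=
  forall F : set (set J),
    (forall U, F U -> openJ U) ->
    directed_set (fun U V => U `<=` V) F ->
    nu (\bigcup_(U in F) U) = ereal_sup (nu @` F).

Definition bounded_valJ (nu : set J -> \bar R) : Prop := nu setT < +oo.

Definition point_continuousJ (nu : set J -> \bar R) : Prop :=
  forall (U : set J) (r : R), openJ U -> (0 <= r)%R -> r%:E < nu U ->
    exists A : set J, finite_set A /\ A `<=` U /\
      forall V, openJ V -> A `<=` V -> r%:E < nu V.

Definition diracJ (x : J) (U : set J) : \bar R :=
  if `[< U x >] then 1 else 0.

Definition discrete_valJ (r : nat -> R) (x : nat -> J) (U : set J) : \bar R :=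
  ereal_sup (range (fun n => \sum_(i < n) ((r i)%:E * diracJ (x i) U))).

Definition muJ (U : set J) : \bar R := if `[< U !=set0 >] then 1 else 0.

End Valuations.

From HB Require Import structures.
From mathcomp Require Import all_boot all_order all_algebra.
From mathcomp Require Import all_classical all_reals ereal.
From mathcomp Require Import zify lra.
Import Order.TTheory GRing.Theory Num.Theory.
Set Implicit Arguments. Unset Strict Implicit. Unset Printing Implicit Defensive.
Local Open Scope classical_set_scope.
Local Open Scope ring_scope.

(* A Scott-open subset of J is determined column by column: column a is either
   empty or consists of (a, oo) and the points (a, m) with m >= h a, and the
   opens correspond to the "profiles" h satisfying one admissibility condition.
   Unions and intersections of opens become pointwise min and max of profiles,
   so modularity shows that changing one column changes nu by an amount that
   depends on that column only.  This defines the masses: (c, n) gets the drop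
   of nu when column c starts at n + 1 instead of n, and (c, oo) what remains of
   the drop in the limit.  Telescoping over the first M columns, the mass of U
   inside them is nu(U_M) - nu(T_M), where U_M agrees with U on those columns
   and T_M empties them.  By Scott continuity nu(U_M) tends to nu(U), while
   nu(T_M) can be brought close to c = inf of nu over nonempty opens, whence
   nu = sum_p mass(p) delta_p + c mu.  Point-continuity of such a sum is read
   off its finite partial sums. *)

Definition ole (x y : option nat) : bool :=
  match x, y with
  | _, None => true
  | None, Some _ => false
  | Some a, Some b => (a <= b)%N
  end.

Definition omin x y := if ole x y then x else y.
Definition omax x y := if ole x y then y else x.

Lemma ole_refl x : ole x x.
Proof. by case: x => /=. Qed.

Lemma ole_trans y x z : ole x y -> ole y z -> ole x z.
Proof. by case: x; case: y; case: z => //= a b c; apply: leq_trans. Qed.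

Lemma ole_total x y : ole x y || ole y x.
Proof. by case: x; case: y => //= a b; apply: leq_total. Qed.

Lemma ole_anti x y : ole x y -> ole y x -> x = y.
Proof. by case: x; case: y => //= a b ab ba; congr Some; apply/eqP; rewrite eqn_leq ab. Qed.

Lemma ole_None x : ole x None. Proof. by case: x. Qed.

Lemma omin_l x y : ole x y -> omin x y = x. Proof. by rewrite /omin => ->. Qed.

Lemma omin_r x y : ole y x -> omin x y = y.
Proof. by rewrite /omin; case: ifP => // xy yx; apply: ole_anti. Qed.

Lemma omax_r x y : ole x y -> omax x y = y. Proof. by rewrite /omax => ->. Qed.

Lemma omax_l x y : ole y x -> omax x y = x.
Proof. by rewrite /omax; case: ifP => // xy yx; apply: ole_anti. Qed.

Lemma ole_omax_l x y : ole x (omax x y).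
Proof. by rewrite /omax; case: ifP => // _; apply: ole_refl. Qed.

Lemma ole_omax_r x y : ole y (omax x y).
Proof.
rewrite /omax; case: ifP => [_|yx]; first exact: ole_refl.
by case/orP: (ole_total x y); rewrite ?yx.
Qed.


Definition incol (x b : option nat) : bool :=
  if b is Some m then ole x (Some m) else x != None.

Lemma incol_omin x y b : incol (omin x y) b = incol x b || incol y b.
Proof.
rewrite /omin; case: x y b => [x|] [y|] [m|] //=; try case: ifP => //=; lia.
Qed.

Lemma incol_omax x y b : incol (omax x y) b = incol x b && incol y b.
Proof.
rewrite /omax; case: x y b => [x|] [y|] [m|] //=; try case: ifP => //=; lia.
Qed.

Lemma incol_le x y b : ole x y -> incol y b -> incol x b.
Proof. by case: x y b => [x|] [y|] [m|] //=; lia. Qed.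

Lemma incol_mono x b d : le_Ninf b d -> incol x b -> incol x d.
Proof. by case: x b d => [x|] [b|] [d|] //=; lia. Qed.

(** * Profiles and the Scott-open subsets of J *)

Definition profile := nat -> option nat.

Definition region (h : profile) : set J := fun p => incol (h p.1) p.2.

Definition admissible (h : profile) : Prop :=
  forall a m c, region h (a, Some m) -> (m <= c)%N -> region h (c, None).

Definition pmin (h1 h2 : profile) : profile := fun a => omin (h1 a) (h2 a).
Definition pmax (h1 h2 : profile) : profile := fun a => omax (h1 a) (h2 a).
Definition ple (h1 h2 : profile) : Prop := forall a, ole (h1 a) (h2 a).

Lemma region_ext h1 h2 : h1 =1 h2 -> region h1 = region h2.
Proof. by move=> e; apply/funext => -[a b]; rewrite /region /= e. Qed.

Lemma region_pmin h1 h2 : region (pmin h1 h2) = region h1 `|` region h2.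
Proof. by apply/funext => p; rewrite /region /pmin incol_omin; apply/propext; split => /orP. Qed.

Lemma region_pmax h1 h2 : region (pmax h1 h2) = region h1 `&` region h2.
Proof. by apply/funext => p; rewrite /region /pmax incol_omax; apply/propext; split => /andP. Qed.

Lemma region_antitone h1 h2 : ple h1 h2 -> region h2 `<=` region h1.
Proof. by move=> le12 [a b]; apply: incol_le. Qed.

Lemma admissible_ext h1 h2 : h1 =1 h2 -> admissible h1 -> admissible h2.
Proof. by rewrite /admissible => /region_ext ->. Qed.

Lemma admissible_pmin h1 h2 : admissible h1 -> admissible h2 -> admissible (pmin h1 h2).
Proof.
by move=> ad1 ad2 a m c; rewrite region_pmin => -[/ad1|/ad2] ad mc; [left|right]; apply: ad.
Qed.

Lemma admissible_pmax h1 h2 : admissible h1 -> admissible h2 -> admissible (pmax h1 h2).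
Proof. by move=> ad1 ad2 a m c; rewrite region_pmax => -[/ad1 ? /ad2 ?] mc; split; auto. Qed.

Lemma leJ_fin x a n : leJ x (a, Some n) -> exists2 m, x = (a, Some m) & (m <= n)%N.
Proof. by case: x => c [m|] /= [[-> mn]|[]] //; exists m. Qed.

Lemma leJ_inf x a : leJ x (a, None) ->
  x = (a, None) \/ exists c m, x = (c, Some m) /\ (c = a \/ (m <= a)%N).
Proof.
case: x => c [m|] /= [[-> _]|[_ ma]] //; last by left.
- by right; exists a, m; split => //; left.
- by right; exists c, m; split => //; right.
Qed.

Lemma region_upclosed h x y : admissible h -> region h x -> leJ x y -> region h y.
Proof.
move=> adm; case: x y => [a b] [c d] hx [[/= <- bd]|[/= -> bc]]; first exact: incol_mono bd hx.
by case: b hx bc => // m hx mc; apply: adm hx mc.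
Qed.

Lemma region_inaccessible h D s : admissible h -> directed_set leJ D ->
  is_sup leJ D s -> region h s -> exists2 x, D x & region h x.
Proof.
move=> adm [[x0 Dx0] _] [ubD lubD] hs; apply: contrapT => noD.
have outD x : D x -> ~ region h x by move=> Dx hx; apply: noD; exists x.
case: s hs ubD lubD => a [n|] hs ubD lubD; case E: (h a) => [k|] in hs;
  rewrite /region /= E // in hs.
- have below x : D x -> exists2 m, x = (a, Some m) & (m < k)%N.
    move=> Dx; have [m xE _] := leJ_fin (ubD x Dx); exists m => //.
    by move: (outD x Dx); rewrite xE /region /= E ltnNge => /negP.
  have [m0 _ m0k] := below x0 Dx0.
  have : leJ (a, Some n) (a, Some (k - 1)%N).
    by apply: lubD => x /below [m -> mk]; left; split => //=; lia.
  by case=> [[_ /= nk]|[//]]; move: hs m0k nk; rewrite /=; lia.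
- have below x : D x -> exists c m, x = (c, Some m) /\ (m <= a + k)%N.
    move=> Dx; case: (leJ_inf (ubD x Dx)) => [xE|[c [m [xE [ca|ma]]]]].
    + by case: (outD x Dx); rewrite xE /region /= E.
    + exists c, m; split => //; move: (outD x Dx); rewrite xE ca /region /= E /=; lia.
    + by exists c, m; split => //; lia.
  have : leJ (a, None) ((a + k).+1, None).
    by apply: lubD => x /below [c [m [-> ma]]]; right; split => //=; lia.
  by case=> [[/= ?]|[]] //; lia.
Qed.

Lemma open_region h : admissible h -> openJ (region h).
Proof.
move=> adm; split=> [x y|D s]; first exact: region_upclosed.
by move=> dD sD /(region_inaccessible adm dD sD) [x]; exists x.
Qed.

Lemma open_admissible h : openJ (region h) -> admissible h.
Proof. by move=> [up _] a m c hm mc; apply: up hm _; right. Qed.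

Lemma admissible_eventually_nonempty h : admissible h -> region h !=set0 ->
  exists N, forall c, (N <= c)%N -> region h (c, None).
Proof.
move=> adm [[a [m|]] ham]; first by exists m => c; apply: adm ham.
move: ham; rewrite /region /=; case E: (h a) => [k|] // _.
by exists k => c; apply: (adm a); rewrite /region /= E /=.
Qed.

Lemma open_column_fin U a : openJ U -> U (a, None) -> exists n, U (a, Some n).
Proof.
move=> [_ inacc] Ua.
pose D : set J := fun x => x.1 = a /\ x.2 != None.
have dirD : directed_set leJ D.
  split=> [|[_ [n1|]] [_ [n2|]] [/= -> _] [/= -> _] //]; first by exists (a, Some 0%N).
  exists (a, Some (maxn n1 n2)); do 2?split => //; left; split => //=.
  - exact: leq_maxl.
  - exact: leq_maxr.
have supD : is_sup leJ D (a, None).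
  split=> [[c [m|]] [/= -> _] //|[c [d|]] ub]; first by left.
  - by case: (ub (a, Some d.+1) (conj erefl isT)) => /= [[_]|[]]; rewrite ?ltnn.
  - by case: (ub (a, Some c.+1) (conj erefl isT)) => /= [[-> _]|[_]]; [left | rewrite ltnn].
have [[c [m|]] [[/= ca ?] Um]] := inacc D _ dirD supD Ua; last by [].
by exists m; rewrite -ca.
Qed.

Definition profile_of (U : set J) : profile := fun a =>
  match pselect (exists n, `[< U (a, Some n) >]) with
  | left e => Some (ex_minn e)
  | right _ => None
  end.

Lemma region_profile_of U : openJ U -> region (profile_of U) = U.
Proof.
move=> oU; have up x y : U x -> leJ x y -> U y by case: oU => up _; apply: up.
apply/funext => -[a b]; rewrite /region /profile_of /=; apply/propext.
case: pselect => [e|ne]; first case: ex_minnP => n /asboolP Un nmin; case: b => [m|] /=.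
- by split=> [nm|Um]; [apply: up Un _; left | apply: nmin; apply/asboolP].
- by split=> // _; apply: up Un _; left.
- by split=> // Um; case: ne; exists m; apply/asboolP.
- by split=> // /(open_column_fin oU) [m Um]; case: ne; exists m; apply/asboolP.
Qed.

Lemma openJT : openJ setT.
Proof. by split=> // D s [[x Dx] _] _ _; exists x. Qed.

(** * Surgery on profiles *)

Definition upd (h : profile) c y : profile := fun a => if a == c then y else h a.
Definition splice (h t : profile) M : profile := fun c => if (c < M)%N then h c else t c.
Definition cut (t : profile) M : profile := splice (fun=> None) t M.
Definition tail_above (t : profile) M :=
  forall c, (M <= c)%N -> exists2 v, t c = Some v & (c <= v)%N.

Definition background c : profile := fun a => Some (maxn a c.+1).

Lemma upd_upd h c x y : upd (upd h c x) c y =1 upd h c y.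
Proof. by move=> a; rewrite /upd; case: eqP. Qed.

Lemma admissible_total h : (forall c, h c != None) -> admissible h.
Proof. by move=> h_total a m c _ _; apply: h_total. Qed.

Lemma tail_above_pmax_id h N : (forall c, (N <= c)%N -> region h (c, None)) ->
  tail_above (pmax h (fun c => Some c)) N.
Proof.
move=> hN c Nc; have := hN c Nc; rewrite /region /pmax /omax /=; case: (h c) => [n|] // _ /=.
by case: leqP => cn; [exists c | exists n => //; apply: ltnW].
Qed.

Lemma tail_above_le t N M : tail_above t N -> (N <= M)%N -> tail_above t M.
Proof. by move=> tailt NM c Mc; apply: tailt; apply: leq_trans Mc. Qed.

Lemma tail_above_splice h t j M : (j <= M)%N -> tail_above t M ->
  tail_above (splice h t j) M.
Proof. by move=> jM tailt c Mc; rewrite /splice ifN; [apply: tailt | lia]. Qed.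

Lemma splice_ple k t M : ple k t -> ple k (splice k t M).
Proof. by move=> kt c; rewrite /splice; case: ifP => _; [apply: ole_refl | apply: kt]. Qed.

Lemma splice_antitone k t M1 M2 : ple k t -> (M1 <= M2)%N -> ple (splice k t M2) (splice k t M1).
Proof.
move=> kt M12 c; rewrite /splice; case: (ltnP c M1) => cM1.
  by rewrite (leq_trans cM1 M12) ole_refl.
by case: ifP => _; [apply: kt | apply: ole_refl].
Qed.

Lemma admissible_upd_background c y : admissible (upd (background c) c y).
Proof.
move=> a m c'; rewrite /region /upd /=.
case: (eqVneq c' c) => [->|//]; case: (eqVneq a c) => _ /=; first by case: y.
lia.
Qed.

Lemma admissible_of_head_above k h M : admissible k ->
  (forall c, (c < M)%N -> ole (k c) (h c) /\ (h c = None -> k c = None)) ->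
  tail_above h M -> admissible h.
Proof.
move=> admk hk ht a m c ham mc; case: (ltnP c M) => cM; last first.
  by have [v hv _] := ht c cM; rewrite /region /= hv.
case: (ltnP a M) => aM.
- have /(admk a m c)/(_ mc) : region k (a, Some m) by apply: incol_le ham; case: (hk a aM).
  by rewrite /region /=; apply: contra_neq => /(proj2 (hk c cM)).
- by have [v hv av] := ht a aM; move: ham; rewrite /region /= hv /=; lia.
Qed.

Lemma admissible_of_high h M : (forall a v, h a = Some v -> (M <= v)%N) ->
  (forall c, (M <= c)%N -> h c != None) -> admissible h.
Proof.
move=> ge ht a m c; rewrite /region /=; case E: (h a) => [v|] //= vm mc.
by apply: ht; have := ge a v E; lia.
Qed.

Lemma admissible_splice k t M : admissible k -> tail_above t M -> admissible (splice k t M).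
Proof.
move=> admk tailt; apply: (admissible_of_head_above (M := M) admk) => [c cM|c Mc].
  by rewrite /splice cM; split=> //; apply: ole_refl.
by rewrite /splice ltnNge Mc /=; apply: tailt.
Qed.

Lemma admissible_cut t M : tail_above t M -> admissible (cut t M).
Proof.
move=> tailt; apply: admissible_of_high (M) _ _ => [a v|c Mc]; rewrite /cut /splice.
  by case: ltnP => // Ma; have [w -> aw [<-]] := tailt a Ma; lia.
by rewrite ltnNge Mc; have [v ->] := tailt c Mc.
Qed.

Lemma region_cut_neq0 t M : tail_above t M -> region (cut t M) !=set0.
Proof.
move=> tailt; exists (M, None); have [v] := tailt M (leqnn M).
by rewrite /region /cut /splice ltnn /= => ->.
Qed.

(** * Finite families of points *)

Lemma ler_sum_subset (R : numDomainType) (I : eqType) (s t : seq I) (F : I -> R) :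
  uniq s -> uniq t -> {subset s <= t} -> (forall i, 0 <= F i) ->
  \sum_(i <- s) F i <= \sum_(i <- t) F i.
Proof.
move=> us ut st F0; rewrite [X in _ <= X](bigID (mem s)) /=.
have -> : \sum_(i <- t | i \in s) F i = \sum_(i <- s) F i.
  rewrite -big_filter; apply: perm_big; apply: uniq_perm (filter_uniq _ ut) us _ => i.
  by rewrite mem_filter andb_idr //; apply: st.
by rewrite lerDl sumr_ge0.
Qed.

Definition colpts K : seq (option nat) := None :: map Some (iota 0 K).

Definition grid M K : seq J := [seq (c, o) | c <- iota 0 M, o <- colpts K].

Lemma grid_uniq M K : uniq (grid M K).
Proof.
apply: allpairs_uniq => [||[a b] [c d] _ _ /= [-> ->]] //; first exact: iota_uniq.
rewrite /colpts cons_uniq map_inj_uniq ?iota_uniq ?andbT; last by move=> x y [].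
by apply/mapP => -[].
Qed.

Lemma mem_grid M K c o :
  ((c, o) \in grid M K) = (c < M)%N && (if o is Some m then (m < K)%N else true).
Proof.
apply/allpairsP/andP => [[[c' o'] [/= c'M o'K [-> ->]]]|[cM oK]].
  rewrite mem_iota in c'M; move: o'K; rewrite inE.
  by case: o' => [m /mapP [m' + [->]]|]; rewrite ?mem_iota.
exists (c, o); split; rewrite //= ?mem_iota //.
by rewrite inE; case: o oK => //= m mK; apply/mapP; exists m; rewrite ?mem_iota.
Qed.

Lemma grid_bound (s : seq J) N : exists M K, (N <= M)%N /\ {subset s <= grid M K}.
Proof.
exists (maxn N (\max_(p <- s) p.1.+1)), (\max_(p <- s) oapp S 0 p.2).
split=> [|[c o] cos]; first exact: leq_maxl.
rewrite mem_grid leq_max (leq_bigmax_seq (c, o)) ?orbT //=.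
by case: o cos => // m mo; apply: (leq_bigmax_seq (c, Some m)).
Qed.

Lemma pickle_prefix (T : countType) (s : seq T) :
  exists n, {subset s <= pmap pickle_inv (iota 0 n)}.
Proof.
exists (\max_(p <- s) (pickle p).+1) => p ps; rewrite mem_pmap; apply/mapP.
by exists (pickle p); rewrite ?pickleK_inv // mem_iota leq0n add0n (leq_bigmax_seq p).
Qed.

Lemma eventually_forall_ltn (P : nat -> nat -> Prop) M :
  (forall c, exists K0, forall K, (K0 <= K)%N -> P c K) ->
  exists K0, forall K, (K0 <= K)%N -> forall c, (c < M)%N -> P c K.
Proof.
move=> ev; elim: M => [|M [K1 IH]]; first by exists 0%N.
have [K2 HK2] := ev M; exists (maxn K1 K2) => K; rewrite geq_max => /andP[K1K K2K] c.
by rewrite ltnS leq_eqVlt => /orP[/eqP ->|cM]; [apply: HK2 | apply: IH].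
Qed.

Lemma discrete_valJ_set0 (R : realType) (r : nat -> R) x : discrete_valJ r x set0 = 0%E.
Proof.
apply/eqP; rewrite eq_le; apply/andP; split.
  apply: ge_ereal_sup => _ [n _ <-]; rewrite big1 // => i _.
  by rewrite /diracJ asboolF ?mule0.
by apply: ereal_sup_ubound; exists 0%N; rewrite ?big_ord0.
Qed.

(** * Volumes of profiles and masses of points *)

Section Decomposition.
Variables (R : realType) (nu : set J -> \bar R).
Hypotheses (nu_val : valuationJ nu) (nu_bd : bounded_valJ nu) (nu_cont : continuous_valJ nu).

Definition vol (h : profile) : R := fine (nu (region h)).

Lemma nu_region h : admissible h -> nu (region h) = (vol h)%:E.
Proof.
move=> adm; have [_ [nu_ge0 [nu_mono _]]] := nu_val.
have oh := open_region adm.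
rewrite /vol fineK // ge0_fin_numE ?nu_ge0 //.
by apply: le_lt_trans nu_bd; apply: nu_mono => //; apply: openJT.
Qed.

Lemma vol_ge0 h : admissible h -> 0 <= vol h.
Proof.
by move=> adm; rewrite -lee_fin -nu_region //; case: nu_val => _ [-> //]; apply: open_region.
Qed.

Lemma vol_antitone h1 h2 : admissible h1 -> admissible h2 -> ple h1 h2 -> vol h2 <= vol h1.
Proof.
move=> adm1 adm2 le12; rewrite -lee_fin -!nu_region //.
by case: nu_val => _ [_ [-> //]]; [apply: open_region.. | apply: region_antitone].
Qed.

Lemma vol_ext h1 h2 : h1 =1 h2 -> vol h1 = vol h2.
Proof. by move=> /region_ext e; rewrite /vol e. Qed.

Lemma vol_modular h1 h2 : admissible h1 -> admissible h2 ->
  vol (pmin h1 h2) + vol (pmax h1 h2) = vol h1 + vol h2.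
Proof.
move=> adm1 adm2; case: nu_val => _ [_ [_ modular]].
have := modular _ _ (open_region adm1) (open_region adm2).
rewrite -region_pmin -region_pmax !nu_region -?EFinD => [[->]||||] //.
- exact: admissible_pmax.
- exact: admissible_pmin.
Qed.

Definition column_vol c y := vol (upd (background c) c y).

Lemma vol_upd_shift V W c y : admissible V -> admissible W -> ple V W -> V c = W c ->
  admissible (upd V c y) -> admissible (upd W c y) ->
  vol (upd V c y) - vol V = vol (upd W c y) - vol W.
Proof.
move=> admV admW VW eVW admV' admW'; case/orP: (ole_total (V c) y) => [Vy|yV].
- have emin : pmin (upd V c y) W =1 V.
    by move=> a; rewrite /pmin /upd; case: eqP => [->|_]; [rewrite -eVW omin_r | rewrite omin_l].
  have emax : pmax (upd V c y) W =1 upd W c y.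
    by move=> a; rewrite /pmax /upd; case: eqP => [->|_]; [rewrite -eVW omax_l | rewrite omax_r].
  by have := vol_modular admV' admW; rewrite (vol_ext emin) (vol_ext emax); lra.
- have emin : pmin V (upd W c y) =1 upd V c y.
    by move=> a; rewrite /pmin /upd; case: eqP => [->|_]; [rewrite omin_r | rewrite omin_l].
  have emax : pmax V (upd W c y) =1 W.
    move=> a; rewrite /pmax /upd; case: eqP => [->|_]; last by rewrite omax_r.
    by rewrite eVW omax_l -?eVW.
  by have := vol_modular admV admW'; rewrite (vol_ext emin) (vol_ext emax); lra.
Qed.

(* Compare V and the background with their common upper bound pmax V B, which
   agrees with both at column c. *)
Lemma vol_upd V c y : admissible V -> admissible (upd V c y) ->
  vol (upd V c y) - vol V = column_vol c y - column_vol c (V c).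
Proof.
move=> admV admV'; pose B := upd (background c) c (V c); pose W := pmax V B.
have admB : admissible B := @admissible_upd_background c (V c).
have admW : admissible W := admissible_pmax admV admB.
have omaxxx x : omax x x = x by rewrite /omax; case: ifP.
have Wc : V c = W c by rewrite /W /pmax /B /upd eqxx omaxxx.
have admW' : admissible (upd W c y).
  apply: admissible_ext (admissible_pmax admV' (@admissible_upd_background c y)) => a.
  by rewrite /W /pmax /B /upd; case: eqP.
have admB' : admissible (upd B c y).
  by apply: admissible_ext (@admissible_upd_background c y) => a; rewrite upd_upd.
have BW : ple B W by move=> a; apply: ole_omax_r.
rewrite (vol_upd_shift admV admW (fun a => ole_omax_l _ _) Wc admV' admW').
rewrite -(vol_upd_shift admB admW BW _ admB' admW'); last by rewrite -Wc /B /upd eqxx.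
by rewrite /column_vol (vol_ext (upd_upd _ _ _ _)).
Qed.

Lemma vol_splice h t M : (forall j, (j <= M)%N -> admissible (splice h t j)) ->
  vol (splice h t M) - vol t = \sum_(c < M) (column_vol c (h c) - column_vol c (t c)).
Proof.
elim: M => [|M IH] adm.
  by rewrite big_ord0 (@vol_ext _ t) ?subrr // => c; rewrite /splice ltn0.
rewrite big_ord_recr /= -IH => [|j jM]; last by apply: adm; lia.
have e : splice h t M.+1 =1 upd (splice h t M) M (h M).
  by move=> c; rewrite /splice /upd ltnS leq_eqVlt; case: eqP => [->|]; rewrite ?ltnn.
have := vol_upd (adm M (leqnSn M)) (admissible_ext e (adm _ (leqnn _))).
by rewrite -(vol_ext e) /splice ltnn; lra.
Qed.

(* The head is lifted to height M first, so that every intermediate profile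
   stays admissible, and only then removed. *)
Lemma vol_splice_cut k t M : admissible k -> tail_above t M ->
  vol (splice k t M) - vol (cut t M) =
  \sum_(c < M) (column_vol c (k c) - column_vol c None).
Proof.
move=> admk tailt; pose lift c := omap (maxn M) (k c); pose l := splice lift t M.
have tail_l : tail_above l M := tail_above_splice lift (leqnn M) tailt.
have tail_cut : tail_above (cut t M) M := tail_above_splice _ (leqnn M) tailt.
have phaseA : vol (splice k l M) - vol l =
    \sum_(c < M) (column_vol c (k c) - column_vol c (lift c)).
  rewrite vol_splice => [|j jM].
    by apply: eq_bigr => c _; rewrite /l /splice ltn_ord.
  apply: admissible_of_head_above admk _ (tail_above_splice k jM tail_l).
  move=> c cM; rewrite /l /splice cM; case: ifP => _; first by rewrite ole_refl.
  by rewrite /lift; case: (k c) => //= n; rewrite leq_maxr.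
have phaseB : vol (splice lift (cut t M) M) - vol (cut t M) =
    \sum_(c < M) (column_vol c (lift c) - column_vol c None).
  rewrite vol_splice => [|j jM].
    by apply: eq_bigr => c _; rewrite /cut /splice ltn_ord.
  apply: admissible_of_high (M) _ _ => [a v|c Mc].
    rewrite /cut /splice /lift; case: ifP => _; first by case: (k a) => //= n [<-]; apply: leq_maxl.
    by case: ifP => // /negbT; rewrite -leqNgt => Ma; have [w -> aw [<-]] := tailt a Ma; lia.
  by have [v -> _] := tail_above_splice lift jM tail_cut Mc.
have eA : splice k l M =1 splice k t M by move=> c; rewrite /l /splice; case: (c < M)%N.
have eB : splice lift (cut t M) M =1 l by move=> c; rewrite /l /cut /splice; case: (c < M)%N.
rewrite -(vol_ext eA); rewrite (vol_ext eB) in phaseB.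
have -> : \sum_(c < M) (column_vol c (k c) - column_vol c None) =
    \sum_(c < M) (column_vol c (k c) - column_vol c (lift c)) +
    \sum_(c < M) (column_vol c (lift c) - column_vol c None).
  by rewrite -big_split; apply: eq_bigr => c _ /=; lra.
lra.
Qed.

Lemma column_vol_antitone c x y : ole x y -> column_vol c y <= column_vol c x.
Proof.
move=> xy; apply: vol_antitone; try exact: admissible_upd_background.
by move=> a; rewrite /upd; case: eqP => // _; apply: ole_refl.
Qed.

Definition column_vol_inf c := inf (range (fun n => column_vol c (Some n))).

Lemma column_vol_inf_has_lbound c : has_lbound (range (fun n => column_vol c (Some n))).
Proof. by exists (column_vol c None) => _ [n _ <-]; apply: column_vol_antitone; case: n. Qed.

Lemma column_vol_inf_le c n : column_vol_inf c <= column_vol c (Some n).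
Proof. by apply: ge_inf (column_vol_inf_has_lbound c) _ _; exists n. Qed.

Lemma column_vol_le_lim c : column_vol c None <= column_vol_inf c.
Proof.
apply: lb_le_inf; first by exists (column_vol c (Some 0)), 0%N.
by move=> _ [n _ <-]; apply: column_vol_antitone.
Qed.

Definition mass (p : J) : R :=
  match p with
  | (c, Some n) => column_vol c (Some n) - column_vol c (Some n.+1)
  | (c, None) => column_vol_inf c - column_vol c None
  end.

Definition mass_on (U : set J) (p : J) : R := if `[< U p >] then mass p else 0.

Lemma mass_ge0 p : 0 <= mass p.
Proof.
case: p => c [n|]; rewrite /= subr_ge0; last exact: column_vol_le_lim.
by apply: column_vol_antitone => /=.
Qed.

Lemma mass_on_ge0 U p : 0 <= mass_on U p.
Proof. by rewrite /mass_on; case: ifP => _ //; apply: mass_ge0. Qed.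

Lemma sum_mass_fin c n K : \sum_(0 <= m < K | (n <= m)%N) mass (c, Some m) =
  column_vol c (Some n) - column_vol c (Some (maxn n K)).
Proof.
elim: K => [|K IH]; first by rewrite big_geq // maxn0 subrr.
rewrite big_mkcond big_nat_recr //= -big_mkcond IH.
case: (leqP n K) => nK; last by rewrite !(maxn_idPl _) ?(ltnW nK) // addr0.
by rewrite (maxn_idPr (leqW nK)); lra.
Qed.

Definition column_mass (U : set J) c K := \sum_(o <- colpts K) mass_on U (c, o).

Lemma column_mass_region k c K : column_mass (region k) c K =
  if k c is Some n then column_vol_inf c - column_vol c None +
    (column_vol c (Some n) - column_vol c (Some (maxn n K)))
  else 0.
Proof.
rewrite /column_mass big_cons big_map /mass_on /region /= !asboolb.
case: (k c) => [n|] /=; last by rewrite add0r big1 // => m _; rewrite asboolb.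
rewrite -sum_mass_fin /index_iota subn0 [in RHS]big_mkcond.
by congr (_ + _); apply: eq_bigr => m _; rewrite asboolb.
Qed.

Lemma column_mass_le k c K :
  column_mass (region k) c K <= column_vol c (k c) - column_vol c None.
Proof.
rewrite column_mass_region; case: (k c) => [n|]; last by rewrite subrr.
by have := column_vol_inf_le c (maxn n K); lra.
Qed.

Lemma column_mass_approx k c d : 0 < d -> exists K0, forall K, (K0 <= K)%N ->
  column_vol c (k c) - column_vol c None <= column_mass (region k) c K + d.
Proof.
move=> d0; case E: (k c) => [n|]; last by exists 0%N => K _; rewrite column_mass_region E; lra.
have ne : range (fun m => column_vol c (Some m)) !=set0 by exists (column_vol c (Some 0)), 0%N.
have [_ [K1 _ <-] K1lt] := inf_adherent d0 (conj ne (column_vol_inf_has_lbound c)).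
exists (maxn n K1) => K; rewrite geq_max => /andP[nK K1K].
rewrite column_mass_region E (maxn_idPr nK).
by have := @column_vol_antitone c (Some K1) (Some K) K1K; rewrite -/(column_vol_inf c); lra.
Qed.

Lemma sum_grid U M K : \sum_(p <- grid M K) mass_on U p = \sum_(c < M) column_mass U c K.
Proof. by rewrite big_allpairs -(big_mkord xpredT (column_mass U ^~ K)) /index_iota subn0. Qed.

Definition mu_weight : R := inf [set vol h | h in [set h | admissible h /\ region h !=set0]].

Lemma mu_weight_has_lbound :
  has_lbound [set vol h | h in [set h | admissible h /\ region h !=set0]].
Proof. by exists 0 => _ [h [adm _] <-]; apply: vol_ge0. Qed.

Lemma mu_weight_nonempty :
  [set vol h | h in [set h | admissible h /\ region h !=set0]] !=set0.
Proof.
exists (vol (fun c => Some c)), (fun c => Some c) => //.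
by split; [apply: admissible_total | exists (0%N, None)].
Qed.

Lemma mu_weight_ge0 : 0 <= mu_weight.
Proof. by apply: lb_le_inf mu_weight_nonempty _ => _ [h [adm _] <-]; apply: vol_ge0. Qed.

Lemma mu_weight_le h : admissible h -> region h !=set0 -> mu_weight <= vol h.
Proof. by move=> adm ne; apply: ge_inf mu_weight_has_lbound _ _; exists h. Qed.

Lemma mu_weight_approx e : 0 < e ->
  exists h, [/\ admissible h, region h !=set0 & vol h < mu_weight + e].
Proof.
move=> e0; have inf_ok := conj mu_weight_nonempty mu_weight_has_lbound.
by have [_ [h [adm ne] <-] lt] := inf_adherent e0 inf_ok; exists h.
Qed.

Lemma sum_mass_le_vol k s : admissible k -> region k !=set0 -> uniq s ->
  \sum_(p <- s) mass_on (region k) p <= vol k - mu_weight.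
Proof.
move=> admk nek us; have [N kN] := admissible_eventually_nonempty admk nek.
have [M [K [NM sM]]] := grid_bound s N.
pose t := pmax k (fun c => Some c).
have tailt : tail_above t M by apply: tail_above_le (tail_above_pmax_id kN) NM.
have kt : ple k t by move=> c; apply: ole_omax_l.
apply: le_trans (ler_sum_subset us (grid_uniq M K) sM (mass_on_ge0 _)) _.
have colle : \sum_(c < M) column_mass (region k) c K <=
    \sum_(c < M) (column_vol c (k c) - column_vol c None).
  by apply: ler_sum => c _; apply: column_mass_le.
have := vol_splice_cut admk tailt.
have := vol_antitone admk (admissible_splice admk tailt) (splice_ple M kt).
have := mu_weight_le (admissible_cut tailt) (region_cut_neq0 tailt).
by rewrite sum_grid; lra.
Qed.

Lemma vol_splice_approx k t N e : admissible k -> ple k t -> tail_above t N -> 0 < e ->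
  exists2 M, (N <= M)%N & vol k - e < vol (splice k t M).
Proof.
move=> admk kt tailt e0.
have adm M : (N <= M)%N -> admissible (splice k t M).
  by move=> NM; apply: admissible_splice admk (tail_above_le tailt NM).
pose F := [set region (splice k t M) | M in [set M | (N <= M)%N]].
have openF U : F U -> openJ U by move=> [M NM <-]; apply/open_region/adm.
have dirF : directed_set (fun U V => U `<=` V) F.
  split=> [|_ _ [M1 NM1 <-] [M2 NM2 <-]]; first by exists (region (splice k t N)), N => /=.
  exists (region (splice k t (maxn M1 M2))); split.
    by exists (maxn M1 M2); rewrite //= leq_max NM1.
  by split; apply/region_antitone/splice_antitone; rewrite // leq_max leqnn ?orbT.
have supF : \bigcup_(U in F) U = region k.
  apply/seteqP; split=> [p [_ [M _ <-]]|[a b] kab].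
    exact: region_antitone (splice_ple M kt) p.
  exists (region (splice k t (maxn N a.+1))); first by exists (maxn N a.+1) => //=; apply: leq_maxl.
  by rewrite /region /splice /= leq_max ltnSn orbT.
have := nu_cont openF dirF; rewrite supF nu_region // => supE.
have fin : ereal_sup (nu @` F) \is a fin_num by rewrite -supE.
have [_ [_ [M NM <-] <-] ltM] := ub_ereal_sup_adherent e0 fin.
exists M => //; move: ltM; rewrite -supE nu_region; [by rewrite -EFinB lte_fin | exact: adm].
Qed.

Lemma vol_le_grid_mass k e : admissible k -> region k !=set0 -> 0 < e ->
  exists M K, vol k - mu_weight <= \sum_(p <- grid M K) mass_on (region k) p + e.
Proof.
move=> admk nek e0; pose e3 := e / 3%:R.
have e30 : 0 < e3 by rewrite divr_gt0.
have [h0 [admh0 neh0 h0lt]] := mu_weight_approx e30.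
have [Nk kN] := admissible_eventually_nonempty admk nek.
have [Nh hN] := admissible_eventually_nonempty admh0 neh0.
pose t := pmax (pmax k h0) (fun c => Some c).
have tailt : tail_above t (maxn Nk Nh).
  apply: tail_above_pmax_id => c; rewrite geq_max region_pmax => /andP[Nkc Nhc].
  by split; [apply: kN | apply: hN].
have kt : ple k t by move=> c; apply: ole_trans (ole_omax_l _ _) (ole_omax_l _ _).
have [M NM ltM] := vol_splice_approx admk kt tailt e30.
have tailM := tail_above_le tailt NM.
have cut_le : vol (cut t M) <= vol h0.
  apply: vol_antitone admh0 (admissible_cut tailM) _ => c; rewrite /cut /splice.
  by case: ifP => _; [apply: ole_None | apply: ole_trans (ole_omax_r _ _) (ole_omax_l _ _)].
pose d := e3 / M.+1%:R.
have d0 : 0 < d by rewrite divr_gt0.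
have [K HK] := eventually_forall_ltn M (fun c => column_mass_approx k c d0).
exists M, K.
have colge : \sum_(c < M) (column_vol c (k c) - column_vol c None) <=
    \sum_(c < M) column_mass (region k) c K + d *+ M.
  rewrite -[M in d *+ M]card_ord -sumr_const -big_split /=.
  by apply: ler_sum => c _; apply: HK.
have dM : d *+ M <= e3.
  have -> : e3 = d *+ M.+1 by rewrite /d -mulr_natr divfK // pnatr_eq0.
  exact: ler_wpMn2l (ltW d0) _ _ (leqnSn M).
have := vol_splice_cut admk tailM.
have e3E : e = 3%:R * e3 by rewrite mulrC divfK.
rewrite sum_grid; lra.
Qed.

(* J is enumerated through pickle_inv; an index that decodes to no point gets
   weight 0, so its junk atom (0, oo) is harmless. *)
Definition atom (i : nat) : J := odflt (0%N, None) (pickle_inv i).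
Definition atom_mass (i : nat) : R := oapp mass 0 (pickle_inv i).

Lemma atom_mass_ge0 i : 0 <= atom_mass i.
Proof. by rewrite /atom_mass; case: pickle_inv => //= p; apply: mass_ge0. Qed.

Lemma partial_sum_atoms U n :
  (\sum_(i < n) (atom_mass i)%:E * diracJ (atom i) U)%E =
  (\sum_(p <- pmap pickle_inv (iota 0 n)) mass_on U p)%:E.
Proof.
rewrite -(big_mkord xpredT (fun i => (atom_mass i)%:E * diracJ (atom i) U)%E).
rewrite big_pmap -sumEFin /index_iota subn0; apply: eq_bigr => i _.
rewrite /atom_mass /atom /mass_on /diracJ; case: pickle_inv => [p|] /=; last by rewrite mul0e.
by case: ifP; rewrite ?mule1 ?mule0.
Qed.

Lemma discrete_region k : admissible k -> region k !=set0 ->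
  discrete_valJ atom_mass atom (region k) = (vol k - mu_weight)%:E.
Proof.
move=> admk nek; apply/eqP; rewrite eq_le; apply/andP; split.
  apply: ge_ereal_sup => _ [n _ <-]; rewrite partial_sum_atoms lee_fin.
  by apply: sum_mass_le_vol => //; apply: pmap_uniq (iota_uniq 0 n); apply: pickle_invK.
apply/lee_addgt0Pr => e e0; have [M [K le]] := vol_le_grid_mass admk nek e0.
have [n sub] := pickle_prefix (grid M K).
apply: (@le_trans _ _ ((\sum_(p <- pmap pickle_inv (iota 0 n)) mass_on (region k) p) + e)%:E).
  rewrite lee_fin; apply: le_trans le _; rewrite lerD2r.
  apply: ler_sum_subset sub (mass_on_ge0 _) => //; first exact: grid_uniq.
  by apply: pmap_uniq (iota_uniq 0 n); apply: pickle_invK.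
by rewrite EFinD leeD2r // -partial_sum_atoms; apply: ereal_sup_ubound; exists n.
Qed.

Lemma valuation_decomposition : exists (r : nat -> R) (x : nat -> J) (c : R),
  (forall i, 0 <= r i) /\ 0 <= c /\
  forall U : set J, openJ U -> nu U = (discrete_valJ r x U + c%:E * muJ U)%E.
Proof.
exists atom_mass, atom, mu_weight.
split; [exact: atom_mass_ge0 | split; first exact: mu_weight_ge0].
move=> U oU; have adm : admissible (profile_of U).
  by apply: open_admissible; rewrite region_profile_of.
rewrite -(region_profile_of oU) /muJ; case: (pselect (region (profile_of U) !=set0)) => ne.
  by rewrite asboolT // mule1 discrete_region // nu_region // -EFinD subrK.
have -> : region (profile_of U) = set0 by apply/seteqP; split=> // p Up; apply: ne; exists p.
by case: nu_val => -> _; rewrite discrete_valJ_set0 asboolF ?mule0 ?adde0 // => -[].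
Qed.

End Decomposition.

Lemma point_continuous_decomposition (R : realType) (nu : set J -> \bar R)
    (r : nat -> R) (x : nat -> J) (c : R) :
  (forall i, 0 <= r i) -> 0 <= c ->
  (forall U, openJ U -> nu U = (discrete_valJ r x U + c%:E * muJ U)%E) ->
  point_continuousJ nu.
Proof.
move=> r0 c0 dec U s oU s0 ltU.
have [u Uu] : U !=set0.
  apply/set0P/negP => /eqP U0; move: ltU; rewrite dec // U0 discrete_valJ_set0 /muJ.
  by rewrite asboolF ?mule0 ?adde0 ?lte_fin ?ltNge ?s0 // => -[].
pose S V n := (\sum_(i < n) (r i)%:E * diracJ (x i) V)%E.
rewrite dec // /muJ asboolT ?mule1 in ltU; last by exists u.
have : ((s - c)%:E < discrete_valJ r x U)%E by rewrite EFinB lteBlDr.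
case/ereal_sup_gt => _ [n _ <-] ltn.
exists [set` u :: [seq x i | i <- iota 0 n & `[< U (x i) >]]]; split; last split.
- by apply/finite_seqP; eexists.
- move=> p /=; rewrite inE => /orP[/eqP -> //|/mapP [i]].
  by rewrite mem_filter => /andP[/asboolP Uxi _] ->.
- move=> V oV AV; rewrite dec // /muJ asboolT ?mule1; last first.
    by exists u; apply: AV; rewrite /= mem_head.
  have SUV : (S U n <= S V n)%E.
    apply: lee_sum => i _; apply: lee_wpmul2l; first by rewrite lee_fin.
    rewrite /diracJ; case: (asboolP (U (x i))) => Uxi; last by case: ifP.
    rewrite asboolT //; apply: AV; rewrite /= inE; apply/orP; right; apply/mapP.
    by exists (nat_of_ord i); rewrite // mem_filter asboolT //= mem_iota add0n ltn_ord.
  have SV : (S V n <= discrete_valJ r x V)%E by apply: ereal_sup_ubound; exists n.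
  move: ltn; rewrite EFinB lteBlDr // => ltn.
  by apply: lt_le_trans ltn _; rewrite leeD2r //; apply: le_trans SUV SV.
Qed.

Theorem theorem3p4 (R : realType) (nu : set J -> \bar R) :
  valuationJ nu -> continuous_valJ nu -> bounded_valJ nu ->
  point_continuousJ nu /\
  exists (r : nat -> R) (x : nat -> J) (c : R),
    (forall i, 0 <= r i) /\ 0 <= c /\
    forall U : set J, openJ U ->
      nu U = (discrete_valJ r x U + c%:E * muJ U)%E.
Proof.
move=> nu_val nu_cont nu_bd.
have [r [x [c [r0 [c0 dec]]]]] := valuation_decomposition nu_val nu_bd nu_cont.
by split; [apply: point_continuous_decomposition r0 c0 dec | exists r, x, c].
Qed.
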